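(* If $C$ is a ternary near-extremal self-dual code of length $36$ and $\alpha$ denotes the number of codewords of weight $9$ in $C$, then $\alpha=8\beta$ for some integer $\beta$ with $1\le\beta\le 111$.
   Context: A ternary code of length $n$ is a linear subspace of $\mathbb{F}_3^n$; it is self-dual if it equals its dual with respect to the standard inner product $\sum_k x_k y_k$. The weight of a vector is the number of nonzero coordinates. A ternary self-dual code of length $36$ is near-extremal if its minimum nonzero weight is $9$. *)

From mathcomp Require Import all_boot all_order all_algebra.
Set Implicit Arguments. Unset Strict Implicit. Unset Printing Implicit Defensive.
Import GRing.Theory.
Local Open Scope ring_scope.

Definition ternary_code (n : nat) := {vspace 'rV['F_3]_n}.

Definition tdot (n : nat) (x y : 'rV['F_3]_n) : 'F_3 := \sum_(k < n) x ord0 k * y ord0 k.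

Definition wt (n : nat) (x : 'rV['F_3]_n) : nat := #|[set k : 'I_n | x ord0 k != 0]|.

Definition self_dual (n : nat) (C : ternary_code n) : Prop :=
  forall y : 'rV['F_3]_n, (y \in C) <-> (forall x, x \in C -> tdot x y = 0).

Definition min_weight_eq (n : nat) (C : ternary_code n) (d : nat) : Prop :=
  (exists2 x, x \in C & (x != 0) && (wt x == d)) /\
  (forall x, x \in C -> x != 0 -> (d <= wt x)%N).

Definition near_extremal36 (C : ternary_code 36) : Prop :=
  self_dual C /\ min_weight_eq C 9.

Definition num_weight (n : nat) (C : ternary_code n) (w : nat) : nat :=
  #|[set x : 'rV['F_3]_n | (x \in C) && (wt x == w)]|%N.

From Stdlib Require Import ZArith Reals Lra.
From mathcomp Require Import all_boot all_order all_algebra mxabelem zify.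

(* For a self-dual ternary code C of length n and a set S of coordinates, duality
   gives |C_(~S)| 3^|S| = 3^(n/2) |C_S|, where C_S is the set of codewords supported
   in S.  Summing over the nu-subsets S of a set U of coordinates relates the weight
   distribution of C to the number of pairs (y, S) with supp y included in S; when
   nu is at most the minimum weight 9, only the zero word and, for nu = 9, the words
   of weight 9 contribute.  Taking for U all coordinates (nu <= 8), then all of them
   but one, i (nu <= 9), gives 18 linear equations in the numbers A_j, B_j and Z_j of
   codewords of weight j, of those with i in their support, and of the others; they
   force A_9 = 4 B_9 and A_9 + A_36 = 888.  Finally, negation exchanges the words of
   weight 9 with x_i = 1 and those with x_i = -1, so B_9 is even. *)

Set Implicit Arguments.
Unset Strict Implicit.
Unset Printing Implicit Defensive.

Import GRing.Theory.
Local Open Scope ring_scope.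

Section Coordinates.

Variables (F : finFieldType) (n : nat).
Implicit Types (x : 'rV[F]_n) (S : {set 'I_n}).

Definition supp x : {set 'I_n} := [set k | x 0 k != 0].

Lemma supp0 : supp (0 : 'rV[F]_n) = set0.
Proof. by apply/setP => k; rewrite !inE mxE eqxx. Qed.

Lemma supp_subset_setC1 x (i : 'I_n) : (supp x \subset ~: [set i]) = (x 0 i == 0).
Proof. by rewrite subsetC sub1set !inE negbK. Qed.

Lemma card_setTD_supp x : #|setT :\: supp x| = (n - #|supp x|)%N.
Proof. by rewrite setTD cardsCs setCK card_ord. Qed.

Lemma card_setC1D_supp x (i : 'I_n) :
  #|~: [set i] :\: supp x| = (n - #|supp x| - (x 0 i == 0)%R)%N.
Proof. by rewrite setDE -setCU cardsCs setCK card_ord cardsU1 inE negbK addnC subnDA. Qed.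

Definition coord_mx S : 'M[F]_n := diag_mx (\row_k (k \in S)%:R).

Lemma mul_coord_mx x S : x *m coord_mx S = \row_k (if k \in S then x 0 k else 0).
Proof.
apply/rowP => k; rewrite mul_mx_diag !mxE.
by case: (k \in S); rewrite ?mulr1 ?mulr0.
Qed.

Lemma supp_coord_mx x S : supp (x *m coord_mx S) \subset S.
Proof.
by apply/subsetP => k; rewrite inE mul_coord_mx mxE; case: (k \in S); rewrite ?eqxx.
Qed.

Lemma mul_coord_mx_id x S : supp x \subset S -> x *m coord_mx S = x.
Proof.
move/subsetP=> xS; apply/rowP => k; rewrite mul_coord_mx !mxE.
case: ifPn => // kS; apply/eqP; rewrite eq_sym.
by apply: contraNT kS => nz; apply: xS; rewrite inE.
Qed.

Lemma sub_coord_mx x S : (x <= coord_mx S)%MS = (supp x \subset S).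
Proof.
apply/idP/idP => [/submxP[u ->] | /mul_coord_mx_id <-]; last exact: submxMl.
exact: supp_coord_mx.
Qed.

Lemma mul_tr_coord_mx_eq0 x S : (x *m (coord_mx S)^T == 0) = (supp x \subset ~: S).
Proof.
rewrite tr_diag_mx -/(coord_mx S) mul_coord_mx; apply/eqP/subsetP => [x0 k | xS].
  by rewrite !inE; apply: contra => kS; have /rowP/(_ k) := x0; rewrite !mxE kS => ->.
apply/rowP => k; rewrite !mxE; case: ifP => // kS; apply/eqP.
by apply: contraTT kS => nz; have := xS k; rewrite !inE nz; apply.
Qed.

Lemma card_supp_subset S : #|[set x | supp x \subset S]| = (#|F| ^ #|S|)%N.
Proof.
pose f x : {ffun 'I_n -> F} := [ffun k => x 0 k].
have f_inj : injective f.
  by move=> x1 x2 /ffunP eq12; apply/rowP => k; have := eq12 k; rewrite !ffunE.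
rewrite -(card_pffun_on 0 S predT) -(card_imset _ f_inj); apply: eq_card => g.
apply/imsetP/pffun_onP => [[x] | [gS _]].
  rewrite inE => /subsetP xS ->; split=> // ; apply/subsetP => k.
  by rewrite inE ffunE => nz; apply: xS; rewrite inE.
exists (\row_k g k); last by apply/ffunP => k; rewrite !ffunE mxE.
rewrite inE; apply/subsetP => k; rewrite inE mxE => nz.
by apply: (subsetP gS); rewrite inE.
Qed.

Lemma rank_coord_mx S : \rank (coord_mx S) = #|S|.
Proof.
have: (#|F| ^ \rank (coord_mx S) = #|F| ^ #|S|)%N.
  by rewrite -card_rowg -card_supp_subset; apply: eq_card => x; rewrite !inE sub_coord_mx.
by move/eqP; rewrite eqn_exp2l ?card_finNzRing_gt1 // => /eqP.
Qed.

End Coordinates.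

Section SelfDualMatrix.

Variables (F : finFieldType) (m n : nat) (A : 'M[F]_(m, n)).
Hypothesis A_self_dual : forall y : 'rV_n, (y <= A)%MS = (y *m A^T == 0).

Lemma rank_self_dual : \rank A = n./2.
Proof.
have /eqmx_rank : (kermx A^T == A)%MS by apply/rV_eqP => y; rewrite sub_kermx A_self_dual.
rewrite mxrank_ker mxrank_tr; have := rank_leq_col A; lia.
Qed.

Lemma rank_self_dual_cap_coord S :
  (\rank (A :&: coord_mx F (~: S)) + #|S| = \rank A + \rank (A :&: coord_mx F S))%N.
Proof.
pose B := col_mx A (coord_mx F (~: S)).
have /eqmx_rank : (kermx B^T == A :&: coord_mx F S)%MS.
  apply/rV_eqP => y; rewrite sub_kermx tr_col_mx mul_mx_row row_mx_eq0.
  by rewrite -A_self_dual mul_tr_coord_mx_eq0 setCK sub_capmx sub_coord_mx.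
have rankB : \rank B = \rank (A + coord_mx F (~: S))%MS by rewrite addsmxE.
have := mxrank_sum_cap A (coord_mx F (~: S)); have := rank_leq_col B.
have := cardsC S; rewrite mxrank_ker mxrank_tr rank_coord_mx card_ord; lia.
Qed.

Lemma card_self_dual_cap_coord S :
  (#|rowg (A :&: coord_mx F (~: S))%MS| * #|F| ^ #|S| =
   #|F| ^ \rank A * #|rowg (A :&: coord_mx F S)%MS|)%N.
Proof. by rewrite !card_rowg -!expnD rank_self_dual_cap_coord. Qed.

End SelfDualMatrix.

Section TernaryCode.

Variables (n : nat) (C : ternary_code n).
Implicit Types (x y : 'rV['F_3]_n) (S : {set 'I_n}).

Definition code_mx : 'M['F_3]_(\dim C, n) := \matrix_(j < \dim C) (vbasis C)`_j.

Lemma code_mxE x : (x \in C) = (x <= code_mx)%MS.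
Proof.
apply/idP/idP => [xC | /submxP[u ->]].
  rewrite (coord_vbasis xC) summx_sub // => j _.
  by rewrite scalemx_sub // -(rowK (fun j => (vbasis C)`_j) j) row_sub.
rewrite mulmx_sum_row memv_suml // => j _.
by rewrite rowK memvZ // vbasis_mem // mem_nth ?size_tuple.
Qed.

Lemma tdot_mulmx x y : tdot x y = (x *m y^T) 0 0.
Proof. by rewrite !mxE; apply: eq_bigr => k _; rewrite mxE. Qed.

Lemma self_dual_code_mx : self_dual C -> forall y, (y <= code_mx)%MS = (y *m code_mx^T == 0).
Proof.
move=> C_self_dual y; rewrite -code_mxE; apply/idP/eqP => [yC | y_orth].
  apply/rowP => j; rewrite !mxE -[RHS](proj1 (C_self_dual y) yC (row j code_mx)).
    by rewrite tdot_mulmx !mxE; apply: eq_bigr => k _; rewrite !mxE mulrC.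
  by rewrite code_mxE row_sub.
apply/(proj2 (C_self_dual y)) => x; rewrite code_mxE => /submxP[u ->].
by rewrite tdot_mulmx -mulmxA -[code_mx *m _]trmxK trmx_mul trmxK y_orth trmx0 mulmx0 mxE.
Qed.

Lemma card_code_supp_subset S :
  #|[set x in C | supp x \subset S]| = #|rowg (code_mx :&: coord_mx 'F_3 S)%MS|.
Proof. by apply: eq_card => x; rewrite !inE sub_capmx code_mxE sub_coord_mx. Qed.

Lemma self_dual_shortening S : self_dual C ->
  (#|[set x in C | supp x \subset ~: S]| * 3 ^ #|S| =
   3 ^ n./2 * #|[set x in C | supp x \subset S]|)%N.
Proof.
move=> /self_dual_code_mx C_self_dual.
rewrite !card_code_supp_subset -(rank_self_dual C_self_dual).
by have := card_self_dual_cap_coord C_self_dual S; rewrite card_Fp.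
Qed.

End TernaryCode.

Lemma sum_card_exchange (I J : finType) (A : {pred I}) (B : {pred J}) (R : I -> J -> bool) :
  (\sum_(i in A) #|[set j in B | R i j]| = \sum_(j in B) #|[set i in A | R i j]|)%N.
Proof.
under eq_bigr do rewrite -sum1dep_card.
rewrite (exchange_big_dep (mem B)) => [|i j _ /andP[]//].
apply: eq_bigr => j jB; rewrite -sum1dep_card; apply: eq_bigl => i.
by rewrite [j \in B]jB.
Qed.

Section Draws.

Variable T : finType.
Implicit Types (U B S : {set T}) (k : nat).

Definition draws U k := [set S : {set T} | (S \subset U) && (#|S| == k)].

Lemma card_draws_disjoint U B k :
  #|[set S in draws U k | B \subset ~: S]| = 'C(#|U :\: B|, k).
Proof.
by rewrite -cards_draws; apply: eq_card => S; rewrite !inE subsetC setDE subsetI andbAC.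
Qed.

Lemma card_draws_cover0 U k : #|[set S in draws U k | set0 \subset S]| = 'C(#|U|, k).
Proof. by rewrite -cards_draws; apply: eq_card => S; rewrite !inE sub0set andbT. Qed.

Lemma card_draws_cover_small U B k :
  (k < #|B|)%N -> #|[set S in draws U k | B \subset S]| = 0%N.
Proof.
move=> ltkB; apply: eq_card0 => S; rewrite !inE.
apply/andP => -[/andP[_ /eqP cardS] /subset_leq_card]; lia.
Qed.

Lemma card_draws_cover_tight U B : #|[set S in draws U #|B| | B \subset S]| = (B \subset U).
Proof.
have [BU | /negbTE nBU] := boolP (B \subset U).
  rewrite /= -(cards1 B); apply: eq_card => S; rewrite !inE; apply/idP/eqP => [|->].
    by case/andP=> /andP[_ /eqP cardS] BS; apply/eqP; rewrite eq_sym eqEcard BS cardS leqnn.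
  by rewrite BU eqxx subxx.
apply: eq_card0 => S; rewrite !inE; apply/andP => -[/andP[SU _] BS].
by rewrite (subset_trans BS SU) in nBU.
Qed.

End Draws.

Lemma sum_by_value (T : finType) (V : eqType) (P : pred T) (w : T -> V) (s : seq V)
    (f : V -> nat) :
  uniq s -> (forall x, P x -> w x \in s) ->
  (\sum_(x | P x) f (w x) = \sum_(v <- s) #|[set x | P x && (w x == v)]| * f v)%N.
Proof.
move=> s_uniq Ps.
rewrite (eq_bigr (fun x => \sum_(v <- s | v == w x) f v)) => [|x Px]; last first.
  by rewrite -big_filter filter_pred1_uniq ?Ps // big_seq1.
rewrite (exchange_big_dep predT) //=; apply: eq_bigr => v _.
by rewrite -sum_nat_cond_const; apply: eq_bigl => x; rewrite eq_sym.
Qed.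

Section TernaryWeight.

Variable n : nat.
Implicit Types x : 'rV['F_3]_n.

Lemma wtE x : wt x = #|supp x|.
Proof. by []. Qed.

Lemma wt_eq0 x : (wt x == 0)%N = (x == 0).
Proof.
rewrite wtE cards_eq0; apply/eqP/eqP => [x0 | ->]; last by apply/setP => k; rewrite !inE mxE eqxx.
apply/rowP => k; rewrite mxE; apply/eqP; apply: contraT => nz.
by have := in_set0 k; rewrite -x0 inE nz.
Qed.

Lemma wt_opp x : wt (- x) = wt x.
Proof. by apply: eq_card => k; rewrite !inE mxE oppr_eq0. Qed.

Lemma wt_le x : (wt x <= n)%N.
Proof. by have := max_card (supp x); rewrite card_ord. Qed.

Lemma tdot_self x : tdot x x = (wt x)%:R.
Proof.
have sqr_F3 (a : 'F_3) : a * a = (a != 0)%:R by case: a => [[|[|[|]]] //= ?]; apply/val_inj.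
rewrite /tdot (eq_bigr (fun k => ((x 0 k != 0) : nat)%:R)) => [|k _]; last exact: sqr_F3.
by rewrite -natr_sum wtE -sum1dep_card [in RHS]big_mkcond.
Qed.

End TernaryWeight.

Section SelfDualCode.

Variables (n : nat) (C : ternary_code n).
Hypothesis C_self_dual : self_dual C.

Lemma self_dual_wt_dvd3 x : x \in C -> (3 %| wt x)%N.
Proof.
move=> xC; have := proj1 (C_self_dual x) xC x xC.
by rewrite tdot_self => /eqP; rewrite -(dvdn_pcharf (pchar_Fp (isT : prime 3))).
Qed.

Lemma self_dual_moment U nu :
  (\sum_(x in C) 'C(#|U :\: supp x|, nu) * 3 ^ nu =
   3 ^ n./2 * \sum_(y in C) #|[set S in draws U nu | supp y \subset S]|)%N.
Proof.
rewrite -big_distrl /=; under eq_bigr do rewrite -card_draws_disjoint.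
rewrite !(sum_card_exchange (mem C)) big_distrl big_distrr /=.
apply: eq_bigr => S; rewrite inE => /andP[_ /eqP <-].
exact: self_dual_shortening.
Qed.

End SelfDualCode.

Section MinimumWeight.

Variables (n d : nat) (C : ternary_code n).
Hypothesis C_min : forall y, y \in C -> y != 0 -> (d <= wt y)%N.

Lemma sum_draws_cover U nu : (0 < d)%N -> (nu <= d)%N ->
  (\sum_(y in C) #|[set S in draws U nu | supp y \subset S]| =
   'C(#|U|, nu) + (nu == d) * #|[set y in C | (wt y == d) && (supp y \subset U)]|)%N.
Proof.
move=> d_gt0 le_nu_d; rewrite (bigD1 0) ?mem0v //= supp0 card_draws_cover0; congr (_ + _)%N.
rewrite (eq_bigr (fun y => if (nu == d) && (wt y == d) && (supp y \subset U) then 1 else 0)%N).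
  rewrite -big_mkcondr sum1dep_card; case: eqP => _ /=; last first.
    by rewrite mul0n; apply: eq_card0 => y; rewrite !inE andbF.
  rewrite mul1n; apply: eq_card => y; rewrite !inE.
  by case: (y =P 0) => [-> | _]; rewrite ?andbT // wtE supp0 cards0 ltn_eqF ?andbF.
move=> y /andP[yC nz]; have := C_min yC nz; rewrite wtE => le_d_wt.
have [wt_nu | ne_wt_nu] := eqVneq #|supp y| nu.
  have nu_d : nu = d by lia.
  by rewrite -wt_nu card_draws_cover_tight wt_nu nu_d eqxx; case: (supp y \subset U).
rewrite card_draws_cover_small; last by rewrite ltn_neqAle eq_sym ne_wt_nu (leq_trans le_nu_d).
by case: eqP => //= nu_d; rewrite -wtE -nu_d (negbTE ne_wt_nu).
Qed.

End MinimumWeight.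

Section CoordinateWeights.

Variables (n : nat) (C : ternary_code n) (i : 'I_n).

Definition num_weight_on (w : nat) : nat :=
  #|[set x : 'rV['F_3]_n | (x \in C) && (x 0 i != 0) && (wt x == w)]|.

Definition num_weight_off (w : nat) : nat :=
  #|[set x : 'rV['F_3]_n | (x \in C) && (x 0 i == 0) && (wt x == w)]|.

Lemma num_weight_split w : num_weight C w = (num_weight_on w + num_weight_off w)%N.
Proof.
rewrite /num_weight -(cardsID [set x : 'rV['F_3]_n | x 0 i != 0]); congr (_ + _)%N.
  by apply: eq_card => x; rewrite !inE andbAC.
by apply: eq_card => x; rewrite !inE negbK andbCA andbA.
Qed.

Lemma num_weight_on_even w : (2 %| num_weight_on w)%N.
Proof.
rewrite /num_weight_on; set A := [set x | _]; set A1 := [set x : 'rV['F_3]_n | x 0 i == 1].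
suff -> : #|A| = (#|A :&: A1| * 2)%N by apply: dvdn_mull.
rewrite -(cardsID A1 A) muln2 -addnn; congr (_ + _)%N.
rewrite -(card_imset _ (@oppr_inj _)); apply: eq_card => y; rewrite !inE.
have F3_nz (a : 'F_3) : a != 0 -> a != 1 -> a = -1.
  by case: a => [[|[|[|]]] //= ?] _ _; apply/val_inj.
apply/imsetP/idP => [[x] | /andP[/andP[/andP[yC _] wy] /eqP yi1]].
  rewrite !inE => /andP[xi1 /andP[/andP[xC xi] wx]] ->.
  by rewrite memvN xC wt_opp wx mxE (F3_nz _ xi xi1) opprK !eqxx.
exists (- y); last by rewrite opprK.
by rewrite !inE memvN yC wt_opp wy mxE yi1.
Qed.

Lemma num_weight_on0 : num_weight_on 0%N = 0%N.
Proof.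
apply: eq_card0 => x; rewrite !inE wt_eq0 andbC.
by case: eqP => // ->; rewrite mxE eqxx andbF.
Qed.

Lemma num_weight_off0 : num_weight_off 0%N = 1%N.
Proof.
rewrite -(cards1 (0 : 'rV['F_3]_n)); apply: eq_card => x; rewrite !inE wt_eq0 andbC.
by case: eqP => // ->; rewrite mem0v mxE eqxx.
Qed.

End CoordinateWeights.

Lemma num_weight_gt0 n (C : ternary_code n) d : min_weight_eq C d -> (0 < num_weight C d)%N.
Proof. by case=> -[x xC /andP[_ wx]] _; apply/card_gt0P; exists x; rewrite inE xC wx. Qed.

Section NearExtremal36.

Variable C : ternary_code 36.
Hypothesis C_ne : near_extremal36 C.

Definition weights36 : seq nat := [:: 0; 9; 12; 15; 18; 21; 24; 27; 30; 33; 36]%N.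

Lemma near_extremal36_wt x : x \in C -> wt x \in weights36.
Proof.
case: C_ne => C_sd [_ C_min] xC.
have : wt x \in [seq w <- iota 0 37 | (3 %| w) && ((w == 0) || (8 < w))]%N.
  rewrite mem_filter mem_iota ltnS wt_le (self_dual_wt_dvd3 C_sd xC) wt_eq0 andbT /=.
  by case: (x =P 0) => // /eqP nz; rewrite C_min.
exact.
Qed.

Lemma near_extremal36_global nu : (nu <= 8)%N ->
  (\sum_(j <- weights36) num_weight C j * ('C(36 - j, nu) * 3 ^ nu) = 3 ^ 18 * 'C(36, nu))%N.
Proof.
case: (C_ne) => C_sd [_ C_min] le_nu8.
have := self_dual_moment C_sd setT nu.
rewrite (sum_draws_cover C_min) ?(leqW le_nu8) // ltn_eqF // mul0n addn0 cardsT card_ord => <-.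
under [RHS]eq_bigr do rewrite card_setTD_supp -wtE.
rewrite (sum_by_value (s := weights36) (fun j => 'C(36 - j, nu) * 3 ^ nu)%N) //.
exact: near_extremal36_wt.
Qed.

Lemma near_extremal36_local i nu : (nu <= 9)%N ->
  (\sum_(j <- weights36) num_weight_off C i j * ('C(35 - j, nu) * 3 ^ nu) +
   \sum_(j <- weights36) num_weight_on C i j * ('C(36 - j, nu) * 3 ^ nu) =
   3 ^ 18 * ('C(35, nu) + (nu == 9) * num_weight_off C i 9))%N.
Proof.
case: (C_ne) => C_sd [_ C_min] le_nu9.
have cover := sum_draws_cover C_min (~: [set i]) isT le_nu9.
rewrite cardsC1 card_ord in cover.
have -> : num_weight_off C i 9 = #|[set y in C | (wt y == 9)%N && (supp y \subset ~: [set i])]|.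
  by apply: eq_card => y; rewrite !inE supp_subset_setC1 andbA andbAC.
rewrite -cover.
apply: etrans (self_dual_moment C_sd _ nu).
rewrite (bigID (fun x : 'rV['F_3]_36 => x 0 i == 0)) /=.
under [X in _ = (X + _)%N]eq_bigr => x /andP[_ /eqP xi0] do
  rewrite card_setC1D_supp xi0 eqxx subnAC subn1 -wtE.
under [X in _ = (_ + X)%N]eq_bigr => x /andP[_ /negbTE xi0] do
  rewrite card_setC1D_supp xi0 subn0 -wtE.
rewrite (sum_by_value (s := weights36) (fun j => 'C(35 - j, nu) * 3 ^ nu)%N) //.
rewrite (sum_by_value (s := weights36) (fun j => 'C(36 - j, nu) * 3 ^ nu)%N) //.
all: by move=> x /andP[/near_extremal36_wt].
Qed.

End NearExtremal36.

(* Binomial coefficients and powers of 3 are unary in [nat]: [zbin] recomputes the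
   coefficients in binary [Z], and the moment equations are then solved over [R] by [lra]. *)
Section WeightSystem.

Local Open Scope Z_scope.

Fixpoint zfact (n : nat) : Z := if n is k.+1 then Z.of_nat n * zfact k else 1.

Definition zbin (n k : nat) : Z :=
  if (k <= n)%N then zfact n / (zfact k * zfact (n - k)) else 0.

Lemma Z_of_nat_fact n : Z.of_nat n`! = zfact n.
Proof. by elim: n => [|n IHn] //=; rewrite factS Nat2Z.inj_mul IHn. Qed.

Local Open Scope R_scope.

Lemma INR_bin n k : INR 'C(n, k) = IZR (zbin n k).
Proof.
rewrite INR_IZR_INZ /zbin; case: leqP => [le_kn | lt_nk]; last by rewrite bin_small.
rewrite -!Z_of_nat_fact -(bin_fact le_kn) !Nat2Z.inj_mul Z.div_mul //.
by rewrite -Nat2Z.inj_mul; have := fact_gt0 k; have := fact_gt0 (n - k); lia.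
Qed.

Lemma INR_exp3 k : INR (3 ^ k) = 3 ^ k.
Proof. by elim: k => [|k IHk] //=; rewrite expnS mult_INR IHk /=; lra. Qed.

Lemma INR_moment (s : seq nat) (F : nat -> nat) m nu :
  INR (\sum_(j <- s) F j * ('C(m - j, nu) * 3 ^ nu))%N =
  \big[Rplus/0]_(j <- s) (INR (F j) * (IZR (zbin (m - j) nu) * 3 ^ nu)).
Proof.
rewrite (big_morph INR plus_INR (erefl : INR 0 = 0)).
by apply: eq_bigr => j _; rewrite !mult_INR INR_bin INR_exp3.
Qed.

Ltac eval_zbin := repeat match goal with
  | H : context [zbin ?n ?k] |- _ =>
      let v := eval vm_compute in (zbin n k) in change (zbin n k) with v in H end.

Lemma weights36_moment_system (A B Z : nat -> nat) :
  (forall j, A j = B j + Z j)%N -> B 0%N = 0%N -> Z 0%N = 1%N ->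
  (forall nu, nu <= 8 ->
    \sum_(j <- weights36) A j * ('C(36 - j, nu) * 3 ^ nu) = 3 ^ 18 * 'C(36, nu))%N ->
  (forall nu, nu <= 9 ->
    \sum_(j <- weights36) Z j * ('C(35 - j, nu) * 3 ^ nu) +
    \sum_(j <- weights36) B j * ('C(36 - j, nu) * 3 ^ nu) =
    3 ^ 18 * ('C(35, nu) + (nu == 9) * Z 9))%N ->
  (A 9 = 4 * B 9 /\ A 9 + A 36 = 888)%N.
Proof.
move=> AE B0 Z0 glob loc.
pose mom F m nu :=
  \big[Rplus/0]_(j <- weights36) (INR (F j) * (IZR (zbin (m - j) nu) * 3 ^ nu)).
(* [INR] is pushed inward while [nu] is still a variable: matching the [INR] lemmas
   against closed [nat] terms would evaluate them in unary. *)
have globR nu : (nu <= 8)%N -> mom A 36%N nu = 3 ^ 18 * IZR (zbin 36 nu).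
  by move=> /glob /(f_equal INR); rewrite INR_moment mult_INR INR_exp3 INR_bin.
have locR nu : (nu <= 9)%N -> mom Z 35%N nu + mom B 36%N nu =
    3 ^ 18 * (IZR (zbin 35 nu) + INR (nu == 9%N) * INR (Z 9%N)).
  move=> /loc /(f_equal INR).
  by rewrite plus_INR !INR_moment mult_INR INR_exp3 plus_INR mult_INR INR_bin.
have AER j : INR (A j) = INR (B j) + INR (Z j) by rewrite AE plus_INR.
move: (globR 0%N isT) (globR 1%N isT) (globR 2%N isT) (globR 3%N isT) (globR 4%N isT)
  (globR 5%N isT) (globR 6%N isT) (globR 7%N isT) (globR 8%N isT).
move: (locR 1%N isT) (locR 2%N isT) (locR 3%N isT) (locR 4%N isT) (locR 5%N isT)
  (locR 6%N isT) (locR 7%N isT) (locR 8%N isT) (locR 9%N isT).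
rewrite /mom unlock /= !AER B0 Z0 INR_0 INR_1 => *.
eval_zbin.
split; apply: INR_eq; rewrite ?mult_INR ?plus_INR !AER.
  have -> : INR 4 = 4 by rewrite INR_IZR_INZ.
  lra.
have -> : INR 888 = 888 by rewrite INR_IZR_INZ.
lra.
Qed.

End WeightSystem.

Local Close Scope ring_scope.

Theorem fact4p3 (C : ternary_code 36) :
  near_extremal36 C ->
  exists beta : nat, num_weight C 9 = (8 * beta)%N /\ (1 <= beta <= 111)%N.
Proof.
move=> C_ne; pose i : 'I_36 := ord0.
have [A9E A9_A36] := weights36_moment_system (num_weight_split C i)
  (num_weight_on0 C i) (num_weight_off0 C i) (near_extremal36_global C_ne)
  (near_extremal36_local C_ne i).
have [beta B9E] := dvdnP (num_weight_on_even C i 9).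
have A9_gt0 := num_weight_gt0 (proj2 C_ne).
by exists beta; lia.
Qed.
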